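(* An element $a\in C\ell_{1,2}$ is invertible (i.e. there exists $b\in C\ell_{1,2}$ with $ab=ba=1$) if and only if $P(a)\neq 0$, and in this case $$a^{-1}=\frac{N(a)-2T(a)e_7}{P(a)}\,\bar a.$$
   Context: $C\ell_{1,2}$ is the real Clifford algebra generated by $i_1,i_2,i_3$ with $i_1^2=1$, $i_2^2=i_3^2=-1$ and $i_ti_m=-i_mi_t$ for $t\neq m$, with real basis $e_0=1$, $e_1=i_1$, $e_2=i_2$, $e_3=i_1i_2$, $e_4=i_3$, $e_5=i_1i_3$, $e_6=i_2i_3$, $e_7=i_1i_2i_3$. For $a=\sum_{t=0}^7 a_te_t$ define $\bar a=a_0-a_1e_1-a_2e_2-a_3e_3-a_4e_4-a_5e_5-a_6e_6+a_7e_7$, $N(a)=a_0^2-a_1^2+a_2^2-a_3^2+a_4^2-a_5^2+a_6^2-a_7^2$, $T(a)=a_0a_7+a_2a_5-a_1a_6-a_3a_4$, $P(a)=N(a)^2+4T(a)^2$. *)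

(* The real Clifford algebra Cl_{1,2} over a real field R,
   represented by coordinate vectors w.r.t. the basis e_0..e_7, where the
   index t in binary (bit0 = i1, bit1 = i2, bit2 = i3) encodes the blade:
   e_0=1, e_1=i1, e_2=i2, e_3=i1i2, e_4=i3, e_5=i1i3, e_6=i2i3, e_7=i1i2i3. *)
From HB Require Import structures.
From mathcomp Require Import all_boot all_order all_algebra.
Set Implicit Arguments. Unset Strict Implicit. Unset Printing Implicit Defensive.
Import Order.TTheory GRing.Theory Num.Theory.
Local Open Scope ring_scope.

Notation Cl12 R := {ffun 'I_8 -> R}.

Section Cl12.
Variable R : realFieldType.

Definition bit (t : nat) (j : nat) : bool := odd (t %/ 2 ^ j).

(* index of the blade e_t e_m (symmetric difference of generator sets) *)
Definition xorI (t m : 'I_8) : 'I_8 :=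
  inord (\sum_(j < 3) (bit t j (+) bit m j) * 2 ^ j)%N.

(* number of transpositions needed to sort the word e_t e_m *)
Definition swaps (t m : 'I_8) : nat :=
  (\sum_(j < 3) \sum_(k < 3) [&& bit m j, bit t k & (j < k)%N])%N.

(* number of common generators squaring to -1 (i2^2 = i3^2 = -1, i1^2 = 1) *)
Definition negsq (t m : 'I_8) : nat :=
  ((bit t 1 && bit m 1) + (bit t 2 && bit m 2))%N.

(* e_t e_m = clsign t m * e_(xorI t m) *)
Definition clsign (t m : 'I_8) : R := (-1) ^+ (swaps t m + negsq t m).

Definition e (t : nat) : Cl12 R := [ffun s : 'I_8 => ((s : nat) == t)%:R].

Definition clscale (c : R) (x : Cl12 R) : Cl12 R := [ffun s : 'I_8 => c * x s].

Definition clmul (a b : Cl12 R) : Cl12 R :=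
  [ffun s : 'I_8 => \sum_(t < 8) \sum_(m < 8)
      if xorI t m == s then clsign t m * a t * b m else 0].

Definition co (a : Cl12 R) (k : nat) : R := a (inord k).

Definition clbar (a : Cl12 R) : Cl12 R :=
  [ffun s : 'I_8 => if (s == ord0) || ((s : nat) == 7%N) then a s else - a s].

Definition N (a : Cl12 R) : R :=
  co a 0 ^+ 2 - co a 1 ^+ 2 + co a 2 ^+ 2 - co a 3 ^+ 2
  + co a 4 ^+ 2 - co a 5 ^+ 2 + co a 6 ^+ 2 - co a 7 ^+ 2.

Definition T (a : Cl12 R) : R :=
  co a 0 * co a 7 + co a 2 * co a 5 - co a 1 * co a 6 - co a 3 * co a 4.

Definition P (a : Cl12 R) : R := N a ^+ 2 + 4 * T a ^+ 2.

End Cl12.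

From HB Require Import structures.
From mathcomp Require Import all_boot all_order all_algebra.
From mathcomp Require Import ring.
Import Order.TTheory GRing.Theory Num.Theory.
Local Open Scope ring_scope.

(* The pseudoscalar e_7 = i1 i2 i3 is central with e_7^2 = -1, so the span of
   e_0 and e_7 is a copy of the complex numbers inside the centre.  Both
   (bar a) a and a (bar a) equal the central element N(a) + 2 T(a) e_7, whose
   squared complex modulus is P(a).  If P(a) != 0, multiplying bar a by the
   complex inverse of N(a) + 2 T(a) e_7 gives a two-sided inverse of a.  If
   P(a) = 0 then (bar a) a = 0, and a right inverse b would force
   bar a = (bar a) a b = 0, hence a = 0. *)

(* Basis multiplication table: e_t e_m = (-1)^(sign_table t m) e_(xor_table t m). *)
Definition xor_table (t m : nat) : nat :=
  nth 0%N (nth [::]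
  [:: [:: 0; 1; 2; 3; 4; 5; 6; 7];
      [:: 1; 0; 3; 2; 5; 4; 7; 6];
      [:: 2; 3; 0; 1; 6; 7; 4; 5];
      [:: 3; 2; 1; 0; 7; 6; 5; 4];
      [:: 4; 5; 6; 7; 0; 1; 2; 3];
      [:: 5; 4; 7; 6; 1; 0; 3; 2];
      [:: 6; 7; 4; 5; 2; 3; 0; 1];
      [:: 7; 6; 5; 4; 3; 2; 1; 0]]%N t) m.

Definition sign_table (t m : nat) : bool :=
  nth false (nth [::]
  [:: [:: false; false; false; false; false; false; false; false];
      [:: false; false; false; false; false; false; false; false];
      [:: false; true;  true;  false; false; true;  true;  false];
      [:: false; true;  true;  false; false; true;  true;  false];
      [:: false; true;  true;  false; true;  false; false; true ];
      [:: false; true;  true;  false; true;  false; false; true ];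
      [:: false; false; false; false; true;  true;  true;  true ];
      [:: false; false; false; false; true;  true;  true;  true ]] t) m.

Ltac case_I8 := case=> [[|[|[|[|[|[|[|[|//]]]]]]]] ?].

Lemma val_xorI (t m : 'I_8) : val (xorI t m) = xor_table t m.
Proof.
by move: t m; case_I8; case_I8; rewrite /xorI !big_ord_recr big_ord0 /= inordK.
Qed.

Lemma odd_clsign_exponent (t m : 'I_8) :
  odd (swaps t m + negsq t m) = sign_table t m.
Proof. by move: t m; case_I8; case_I8; rewrite /swaps !big_ord_recr !big_ord0. Qed.

Section Cl12Algebra.
Variable R : realFieldType.
Implicit Types (a b x y z : Cl12 R) (u v c : R) (f g : nat -> R).

Definition clvec f : Cl12 R := [ffun s : 'I_8 => f s].

Definition mul_coords f g (k : nat) : R :=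
  match k with
  | 0%N => f 0 * g 0 + f 1 * g 1 - f 2 * g 2 + f 3 * g 3 - f 4 * g 4 + f 5 * g 5 - f 6 * g 6 - f 7 * g 7
  | 1%N => f 0 * g 1 + f 1 * g 0 + f 2 * g 3 - f 3 * g 2 + f 4 * g 5 - f 5 * g 4 - f 6 * g 7 - f 7 * g 6
  | 2%N => f 0 * g 2 + f 1 * g 3 + f 2 * g 0 - f 3 * g 1 + f 4 * g 6 - f 5 * g 7 - f 6 * g 4 - f 7 * g 5
  | 3%N => f 0 * g 3 + f 1 * g 2 - f 2 * g 1 + f 3 * g 0 - f 4 * g 7 + f 5 * g 6 - f 6 * g 5 - f 7 * g 4
  | 4%N => f 0 * g 4 + f 1 * g 5 - f 2 * g 6 + f 3 * g 7 + f 4 * g 0 - f 5 * g 1 + f 6 * g 2 + f 7 * g 3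
  | 5%N => f 0 * g 5 + f 1 * g 4 + f 2 * g 7 - f 3 * g 6 - f 4 * g 1 + f 5 * g 0 + f 6 * g 3 + f 7 * g 2
  | 6%N => f 0 * g 6 + f 1 * g 7 + f 2 * g 4 - f 3 * g 5 - f 4 * g 2 + f 5 * g 3 + f 6 * g 0 + f 7 * g 1
  | _ => f 0 * g 7 + f 1 * g 6 - f 2 * g 5 + f 3 * g 4 + f 4 * g 3 - f 5 * g 2 + f 6 * g 1 + f 7 * g 0
  end.

Definition clcplx u v : Cl12 R :=
  clvec (fun k => if k == 0%N then u else if k == 7%N then v else 0).

Ltac coordwise := apply/ffunP; case_I8; rewrite !ffunE /=.

Lemma clvec_co a : clvec (co a) = a.
Proof. by apply/ffunP => s; rewrite ffunE /co inord_val. Qed.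

Lemma clsign_table (t m : 'I_8) : clsign R t m = (-1) ^+ sign_table t m.
Proof. by rewrite /clsign -signr_odd odd_clsign_exponent. Qed.

Lemma clmul_vec f g : clmul (clvec f) (clvec g) = clvec (mul_coords f g).
Proof.
apply/ffunP => s; rewrite !ffunE.
under eq_bigr do under eq_bigr do rewrite clsign_table !ffunE -val_eqE val_xorI.
by rewrite !big_ord_recr !big_ord0 /=; move: s; case_I8 => /=; ring.
Qed.

Lemma clbar_vec f :
  clbar (clvec f) = clvec (fun k => if (k == 0%N) || (k == 7%N) then f k else - f k).
Proof. by coordwise. Qed.

Lemma clmulA x y z : clmul (clmul x y) z = clmul x (clmul y z).
Proof.
rewrite -[x]clvec_co -[y]clvec_co -[z]clvec_co !clmul_vec.
by coordwise; ring.
Qed.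

Lemma e_vec k : e R k = clvec (fun s => (s == k)%:R).
Proof. by []. Qed.

Lemma clmul1r x : clmul x (e R 0) = x.
Proof. by rewrite -[x]clvec_co e_vec clmul_vec; coordwise; ring. Qed.

Lemma clmul0l x : clmul 0 x = 0.
Proof.
apply/ffunP => s; rewrite !ffunE; apply: big1 => t _; apply: big1 => m _.
by rewrite ffunE mulr0 mul0r if_same.
Qed.

Lemma e0_neq0 : e R 0 != 0.
Proof. by apply/eqP => /ffunP/(_ ord0); rewrite !ffunE; apply/eqP/oner_neq0. Qed.

Lemma clbar_eq0 a : clbar a = 0 -> a = 0.
Proof.
move=> /ffunP a0; apply/ffunP => s; have := a0 s; rewrite !ffunE.
by case: ifP => // _ /eqP; rewrite oppr_eq0 => /eqP.
Qed.

Lemma clcplx00 : clcplx 0 0 = 0.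
Proof. by coordwise. Qed.

Lemma clcplx_central u v x : clmul (clcplx u v) x = clmul x (clcplx u v).
Proof. by rewrite -[x]clvec_co !clmul_vec; coordwise; ring. Qed.

Lemma clmul_cplx u v u' v' :
  clmul (clcplx u v) (clcplx u' v') = clcplx (u * u' - v * v') (u * v' + v * u').
Proof. by rewrite !clmul_vec; coordwise; ring. Qed.

Lemma clcplx_mulV u v c : c * (u ^+ 2 + v ^+ 2) = 1 ->
  clmul (clcplx (c * u) (- (c * v))) (clcplx u v) = e R 0.
Proof.
move=> cV; rewrite clmul_cplx.
have -> : c * u * u - - (c * v) * v = 1 by rewrite -cV; ring.
by rewrite (_ : _ + _ = 0); [coordwise | ring].
Qed.

Lemma clbar_mul a : clmul (clbar a) a = clcplx (N a) (2 * T a).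
Proof.
by rewrite -[a in clbar a]clvec_co clbar_vec -[X in clmul _ X]clvec_co clmul_vec;
  coordwise; rewrite /N /T; ring.
Qed.

Lemma mul_clbar a : clmul a (clbar a) = clcplx (N a) (2 * T a).
Proof.
by rewrite -[a in clbar a]clvec_co clbar_vec -[X in clmul X _]clvec_co clmul_vec;
  coordwise; rewrite /N /T; ring.
Qed.

Lemma P_eq0 a : P a = 0 -> N a = 0 /\ T a = 0.
Proof.
have T2 : 0 <= 4 * T a ^+ 2 := mulr_ge0 (ler0n _ 4) (sqr_ge0 _).
rewrite /P => /eqP; rewrite paddr_eq0 ?sqr_ge0 // sqrf_eq0 mulf_eq0 pnatr_eq0 sqrf_eq0 /=.
by move=> /andP[/eqP-> /eqP->].
Qed.

Lemma rinv_P_neq0 a b : clmul a b = e R 0 -> P a != 0.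
Proof.
move=> ab; apply/eqP => /P_eq0[N0 T0].
have : clbar a = 0.
  by rewrite -[LHS]clmul1r -ab -clmulA clbar_mul N0 T0 mulr0 clcplx00 clmul0l.
move=> /clbar_eq0 a0; move: ab; rewrite a0 clmul0l => /esym/eqP.
by rewrite (negPf e0_neq0).
Qed.

Lemma clscale_cplx c u v :
  clscale c (clscale u (e R 0) - clscale v (e R 7)) = clcplx (c * u) (- (c * v)).
Proof. by coordwise; ring. Qed.

Lemma clinv_formula a : P a != 0 ->
  let b := clmul (clscale (P a)^-1 (clscale (N a) (e R 0) - clscale (2 * T a) (e R 7)))
                 (clbar a) in
  clmul a b = e R 0 /\ clmul b a = e R 0.
Proof.
have PE : P a = N a ^+ 2 + (2 * T a) ^+ 2 by rewrite /P; ring.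
rewrite PE clscale_cplx => /mulVf /clcplx_mulV zV; split.
  by rewrite -clmulA -clcplx_central clmulA mul_clbar.
by rewrite clmulA clbar_mul.
Qed.

End Cl12Algebra.

Theorem proposition2p7 (R : realFieldType) (a : Cl12 R) :
  ((exists b : Cl12 R, clmul a b = e R 0 /\ clmul b a = e R 0) <-> P a != 0) /\
  (P a != 0 ->
     let b := clmul (clscale (P a)^-1 (clscale (N a) (e R 0) - clscale (2 * T a) (e R 7)))
                     (clbar a) in
     clmul a b = e R 0 /\ clmul b a = e R 0).
Proof.
split; last exact: clinv_formula.
split=> [[b [ab _]] | Pa]; first exact: rinv_P_neq0 ab.
by eexists; exact: clinv_formula Pa.
Qed.
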